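(* Assume (C1) and (C2). For any $u\in\mathcal{D}$ with $u\neq0$, there exists a unique constant $t_0>0$ such that $t_0u\in\mathcal{N}$.
   Context: Fix real numbers $p,q,r$ with $1<p<q$, $\frac p2$ a positive integer, and $r\ge1$, and functions $a,b,c:\mathbb{Z}\to(0,+\infty)$. Conditions: - (C1) There is $b_0>0$ with $b(n)\ge b_0$ for all $n$ and $b(n)\to+\infty$ as $|n|\to\infty$. - (C2) There is $c_0>0$ with $c(n)\le c_0$ for all $n$ and $\sum_n c(n)<+\infty$. Notation and spaces: - $\Delta u(n)=u(n+1)-u(n)$. - $E$ is the set of real sequences $u$ with $\|u\|:=\big(\sum_n[a(n)|\Delta u(n)|^p+b(n)|u(n)|^p]\big)^{1/p}<\infty$. - $\mathcal{D}=\{u\in E:\sum_n c(n)|u(n)|^q\ln|u(n)|^r<+\infty\}$, where terms with $u(n)=0$ are read as $0$. For $u,v\in\mathcal{D}$: $$\langle I'(u),v\rangle=\sum_n[a(n)|\Delta u(n)|^{p-2}\Delta u(n)\Delta v(n)+b(n)|u(n)|^{p-2}u(n)v(n)]-\sum_n c(n)|u(n)|^{q-2}u(n)v(n)\ln|u(n)|^r.$$ $\mathcal{N}=\{u\in\mathcal{D}:u\ne0,\ \langle I'(u),u\rangle=0\}$. *)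

From Stdlib Require Import Reals ZArith.
From Coquelicot Require Import Coquelicot.
Open Scope R_scope.

(* |x|^s for real exponent s >= 0, with the convention |0|^s = 0
   (Stdlib's Rpower 0 s = 1, so we guard the zero case). *)
Definition apow (x s : R) : R :=
  if Req_EM_T x 0 then 0 else Rpower (Rabs x) s.

Definition summableZ (f : Z -> R) : Prop :=
  ex_series (fun n : nat => Rabs (f (Z.of_nat n))) /\
  ex_series (fun n : nat => Rabs (f (- Z.of_nat (S n))%Z)).

Definition sumZ (f : Z -> R) : R :=
  Series (fun n : nat => f (Z.of_nat n)) +
  Series (fun n : nat => f (- Z.of_nat (S n))%Z).

Definition Delta (u : Z -> R) (n : Z) : R := u (n + 1)%Z - u n.

Definition scaleZ (t : R) (u : Z -> R) : Z -> R := fun n => t * u n.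

Definition inE (p : R) (a b : Z -> R) (u : Z -> R) : Prop :=
  summableZ (fun n => a n * apow (Delta u n) p + b n * apow (u n) p).

Definition logterm (q r : R) (c : Z -> R) (u : Z -> R) (n : Z) : R :=
  if Req_EM_T (u n) 0 then 0
  else c n * apow (u n) q * ln (Rpower (Rabs (u n)) r).

Definition inD (p q r : R) (a b c : Z -> R) (u : Z -> R) : Prop :=
  inE p a b u /\ summableZ (logterm q r c u).

Definition dI (p q r : R) (a b c : Z -> R) (u v : Z -> R) : R :=
  sumZ (fun n => a n * apow (Delta u n) (p - 2) * Delta u n * Delta v n
               + b n * apow (u n) (p - 2) * u n * v n)
  - sumZ (fun n => if Req_EM_T (u n) 0 then 0 else
            c n * apow (u n) (q - 2) * u n * v n * ln (Rpower (Rabs (u n)) r)).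

Definition inN (p q r : R) (a b c : Z -> R) (u : Z -> R) : Prop :=
  inD p q r a b c u /\ (exists n, u n <> 0) /\ dI p q r a b c u u = 0.

Definition condC1 (b : Z -> R) : Prop :=
  (exists b0, 0 < b0 /\ forall n, b0 <= b n) /\
  (forall M, exists N : Z, forall n, (N < Z.abs n)%Z -> M < b n).

Definition condC2 (c : Z -> R) : Prop :=
  (exists c0, 0 < c0 /\ forall n, c n <= c0) /\ summableZ c.

(** Along the ray [t u] the Nehari functional factors as
    [<I'(t u), t u> = t^p A - t^q (r C ln t + L)] with [A = ||u||^p > 0],
    [C = sum c |u|^q > 0] and [L = sum c |u|^q ln |u|^r].  Writing [t = e^s]
    and dividing by [t^p], the zeros are the solutions of
    [e^((q-p) s) (r C s + L) = A].  The left-hand side is strictly increasing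
    wherever it is positive and is unbounded, so it takes the value [A > 0]
    exactly once.  The series defining [C] converges because
    [b0 |u(n)|^p <= ||u||^p] bounds [u] uniformly while [sum c < oo]. *)

From Pilot Require Import Defs.
From Stdlib Require Import Reals ZArith Lra Lia.
From Coquelicot Require Import Coquelicot.
Open Scope R_scope.

Lemma Series_term_le (a : nat -> R) (m : nat) :
  (forall k, 0 <= a k) -> ex_series a -> a m <= Series a.
Proof.
  intros Ha Hex.
  apply Rle_trans with (sum_f_R0 a m).
  - destruct m as [|m]; simpl; [lra|].
    pose proof (cond_pos_sum a m Ha); lra.
  - apply sum_incr; [|exact Ha].
    apply is_series_Reals, Series_correct, Hex.
Qed.

Lemma ex_series_Rabs_le (a b : nat -> R) :
  (forall n, Rabs (a n) <= b n) -> ex_series b -> ex_series (fun n => Rabs (a n)).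
Proof.
  intros Hab Hb.
  apply (@ex_series_le R_AbsRing R_CompleteNormedModule _ b); [|exact Hb].
  intros n; unfold norm; simpl; unfold abs; simpl.
  rewrite Rabs_Rabsolu; apply Hab.
Qed.

Lemma summableZ_le (f g : Z -> R) :
  (forall n, Rabs (f n) <= g n) -> summableZ g -> summableZ f.
Proof.
  intros Hfg [Hg1 Hg2].
  assert (Hle : forall n, Rabs (f n) <= Rabs (g n))
    by (intros n; eapply Rle_trans; [apply Hfg | apply Rle_abs]).
  split; [apply (ex_series_Rabs_le _ _ (fun n => Hle _) Hg1)
         |apply (ex_series_Rabs_le _ _ (fun n => Hle _) Hg2)].
Qed.

Lemma summableZ_scal (k : R) (f : Z -> R) :
  summableZ f -> summableZ (fun n => k * f n).
Proof.
  assert (Hk : forall x, Rabs (k * x) <= Rabs k * Rabs x)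
    by (intros x; rewrite Rabs_mult; apply Rle_refl).
  intros [H1 H2]; split.
  - exact (ex_series_Rabs_le _ _ (fun n => Hk _) (ex_series_scal_l (Rabs k) _ H1)).
  - exact (ex_series_Rabs_le _ _ (fun n => Hk _) (ex_series_scal_l (Rabs k) _ H2)).
Qed.

Lemma summableZ_plus (f g : Z -> R) :
  summableZ f -> summableZ g -> summableZ (fun n => f n + g n).
Proof.
  intros [F1 F2] [G1 G2]; split.
  - exact (ex_series_Rabs_le _ _ (fun n => Rabs_triang _ _) (ex_series_plus _ _ F1 G1)).
  - exact (ex_series_Rabs_le _ _ (fun n => Rabs_triang _ _) (ex_series_plus _ _ F2 G2)).
Qed.

Lemma summableZ_Rabs (f : Z -> R) : summableZ f -> summableZ (fun n => Rabs (f n)).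
Proof.
  assert (Habs : forall x, Rabs (Rabs x) <= Rabs x)
    by (intros x; rewrite Rabs_Rabsolu; apply Rle_refl).
  intros [H1 H2]; split.
  - exact (ex_series_Rabs_le _ _ (fun n => Habs _) H1).
  - exact (ex_series_Rabs_le _ _ (fun n => Habs _) H2).
Qed.

Lemma summableZ_ext (f g : Z -> R) :
  (forall n, f n = g n) -> summableZ f -> summableZ g.
Proof.
  intros Hfg Hf; apply summableZ_le with (fun n => Rabs (f n)).
  - intros n; rewrite Hfg; apply Rle_refl.
  - apply summableZ_Rabs, Hf.
Qed.

Lemma sumZ_ext (f g : Z -> R) : (forall n, f n = g n) -> sumZ f = sumZ g.
Proof. intros H; unfold sumZ; f_equal; apply Series_ext; intros; apply H. Qed.

Lemma sumZ_scal (k : R) (f : Z -> R) : sumZ (fun n => k * f n) = k * sumZ f.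
Proof. unfold sumZ; rewrite !Series_scal_l; ring. Qed.

Lemma sumZ_plus (f g : Z -> R) : summableZ f -> summableZ g ->
  sumZ (fun n => f n + g n) = sumZ f + sumZ g.
Proof.
  intros [F1 F2] [G1 G2]; unfold sumZ.
  rewrite (Series_plus (fun n => f (Z.of_nat n))), (Series_plus (fun n => f (- Z.of_nat (S n))%Z));
    try (apply ex_series_Rabs; assumption).
  ring.
Qed.

Lemma sumZ_term_le (f : Z -> R) (n : Z) :
  (forall k, 0 <= f k) -> summableZ f -> f n <= sumZ f.
Proof.
  intros Hf [H1 H2]; unfold sumZ.
  set (fpos := fun k : nat => f (Z.of_nat k)).
  set (fneg := fun k : nat => f (- Z.of_nat (S k))%Z).
  assert (Hpos : forall m, fpos m <= Series fpos)
    by (intros m; apply Series_term_le; [intros k; apply Hf | apply ex_series_Rabs, H1]).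
  assert (Hneg : forall m, fneg m <= Series fneg)
    by (intros m; apply Series_term_le; [intros k; apply Hf | apply ex_series_Rabs, H2]).
  pose proof (Hf (Z.of_nat 0)); pose proof (Hpos 0%nat).
  pose proof (Hf (- Z.of_nat 1)%Z); pose proof (Hneg 0%nat).
  destruct (Z_le_gt_dec 0 n).
  - replace n with (Z.of_nat (Z.to_nat n)) by lia.
    pose proof (Hpos (Z.to_nat n)); unfold fpos, fneg in *; lra.
  - replace n with (- Z.of_nat (S (Z.to_nat (- n - 1))))%Z by lia.
    pose proof (Hneg (Z.to_nat (- n - 1))); unfold fpos, fneg in *; lra.
Qed.

Lemma apow_0 (s : R) : apow 0 s = 0.
Proof. unfold apow; destruct (Req_EM_T 0 0); [reflexivity | contradiction]. Qed.

Lemma apow_neq0 (x s : R) : x <> 0 -> apow x s = Rpower (Rabs x) s.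
Proof. intros H; unfold apow; destruct (Req_EM_T x 0); [contradiction | reflexivity]. Qed.

Lemma apow_ge0 (x s : R) : 0 <= apow x s.
Proof. unfold apow; destruct (Req_EM_T x 0); [lra | left; apply exp_pos]. Qed.

Lemma apow_gt0 (x s : R) : x <> 0 -> 0 < apow x s.
Proof. intros Hx; rewrite apow_neq0 by exact Hx; apply exp_pos. Qed.

Lemma apow_scale (t x s : R) : 0 < t -> apow (t * x) s = Rpower t s * apow x s.
Proof.
  intros Ht; destruct (Req_dec x 0) as [->|Hx].
  - rewrite Rmult_0_r, apow_0; ring.
  - rewrite !apow_neq0 by (try apply Rmult_integral_contrapositive; lra).
    rewrite Rabs_mult, (Rabs_pos_eq t) by lra.
    symmetry; apply Rpower_mult_distr; [exact Ht | apply Rabs_pos_lt, Hx].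
Qed.

Lemma apow_sub2_mul_sqr (x s : R) : apow x (s - 2) * x * x = apow x s.
Proof.
  destruct (Req_dec x 0) as [->|Hx].
  - rewrite !apow_0; ring.
  - rewrite !apow_neq0 by exact Hx.
    assert (Hsqr : Rpower (Rabs x) 2 = x * x).
    { replace 2 with (INR 2) by (simpl; ring).
      rewrite Rpower_pow, pow2_abs by (apply Rabs_pos_lt, Hx); ring. }
    rewrite Rmult_assoc, <- Hsqr, <- Rpower_plus; f_equal; ring.
Qed.

Lemma apow_le_Rpower (x B s : R) : 0 <= s -> Rabs x <= B -> apow x s <= Rpower B s.
Proof.
  intros Hs HxB; destruct (Req_dec x 0) as [->|Hx].
  - rewrite apow_0; left; apply exp_pos.
  - rewrite apow_neq0 by exact Hx.
    apply Rle_Rpower_l; [exact Hs | split; [apply Rabs_pos_lt, Hx | exact HxB]].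
Qed.

Lemma Rabs_le_apow (x s : R) : 1 <= s -> 1 <= Rabs x -> Rabs x <= apow x s.
Proof.
  intros Hs Hx; rewrite apow_neq0 by (intros ->; rewrite Rabs_R0 in Hx; lra).
  rewrite <- (Rpower_1 (Rabs x)) at 1 by lra.
  apply Rle_Rpower; assumption.
Qed.

Lemma exp_le_compat (x y : R) : x <= y -> exp x <= exp y.
Proof.
  intros [Hlt | ->]; [left; apply exp_increasing, Hlt | apply Rle_refl].
Qed.

Lemma exp_affine_lt (d C L s s' : R) : 0 <= d -> 0 < C -> 0 < C * s + L -> s < s' ->
  exp (d * s) * (C * s + L) < exp (d * s') * (C * s' + L).
Proof.
  intros Hd HC Hpos Hss'.
  assert (Hexp : exp (d * s) <= exp (d * s')) by (apply exp_le_compat; nra).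
  assert (Hlin : C * s + L < C * s' + L) by nra.
  pose proof (exp_pos (d * s)).
  apply Rlt_le_trans with (exp (d * s) * (C * s' + L)).
  - apply Rmult_lt_compat_l; assumption.
  - apply Rmult_le_compat_r; lra.
Qed.

Lemma exp_affine_inj (d C L A s s' : R) : 0 <= d -> 0 < C -> 0 < A ->
  exp (d * s) * (C * s + L) = A -> exp (d * s') * (C * s' + L) = A -> s = s'.
Proof.
  intros Hd HC HA Hs Hs'.
  assert (Hpos : forall x, exp (d * x) * (C * x + L) = A -> 0 < C * x + L).
  { intros x Hx; pose proof (exp_pos (d * x)).
    destruct (Rlt_le_dec 0 (C * x + L)); [assumption | nra]. }
  destruct (Rtotal_order s s') as [Hlt|[Heq|Hgt]]; [exfalso | exact Heq | exfalso].
  - pose proof (exp_affine_lt d C L s s' Hd HC (Hpos s Hs) Hlt); lra.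
  - pose proof (exp_affine_lt d C L s' s Hd HC (Hpos s' Hs') Hgt); lra.
Qed.

Lemma exp_affine_surj (d C L A : R) : 0 <= d -> 0 < C -> 0 < A ->
  exists s, exp (d * s) * (C * s + L) = A.
Proof.
  intros Hd HC HA.
  set (f := fun s => exp (d * s) * (C * s + L) - A).
  set (x := - L / C).
  set (y := Rmax 0 x + 1 + A / C).
  assert (Hcont : continuity f) by (unfold f; apply derivable_continuous; reg).
  assert (HAC : 0 < A / C) by (apply Rdiv_lt_0_compat; assumption).
  pose proof (Rmax_l 0 x); pose proof (Rmax_r 0 x).
  assert (Hxy : x < y) by (unfold y; lra).
  assert (Hfx : f x < 0).
  { unfold f; replace (C * x + L) with 0 by (unfold x; field; lra); lra. }
  assert (Hfy : 0 < f y).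
  { assert (HCy : C + A <= C * y + L).
    { assert (C * x = - L) by (unfold x; field; lra).
      unfold y; replace (C * (Rmax 0 x + 1 + A / C)) with (C * Rmax 0 x + C + A)
        by (field; lra).
      nra. }
    assert (1 <= exp (d * y))
      by (rewrite <- exp_0; apply exp_le_compat; unfold y in *; nra).
    unfold f; nra. }
  destruct (IVT f x y Hcont Hxy Hfx Hfy) as [s [_ Hs]].
  exists s; unfold f in Hs; lra.
Qed.

Lemma fibering_root_unique (p q A C L : R) : p <= q -> 0 < A -> 0 < C ->
  exists! t, 0 < t /\ Rpower t p * A - Rpower t q * (C * ln t + L) = 0.
Proof.
  intros Hpq HA HC.
  assert (Hfactor : forall t, Rpower t p * A - Rpower t q * (C * ln t + L)
            = Rpower t p * (A - exp ((q - p) * ln t) * (C * ln t + L))).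
  { intros t; unfold Rpower.
    replace (q * ln t) with (p * ln t + (q - p) * ln t) by ring.
    rewrite exp_plus; ring. }
  assert (Hroot : forall t, 0 < t ->
            Rpower t p * A - Rpower t q * (C * ln t + L) = 0 <->
            exp ((q - p) * ln t) * (C * ln t + L) = A).
  { intros t Ht; rewrite Hfactor; pose proof (exp_pos (p * ln t)); unfold Rpower.
    split; intros Hz; [apply Rmult_integral in Hz as [Hz|Hz] | rewrite Hz]; lra. }
  destruct (exp_affine_surj (q - p) C L A) as [s Hs]; try lra.
  exists (exp s); split.
  - split; [apply exp_pos|]. apply Hroot; [apply exp_pos|]. rewrite ln_exp; exact Hs.
  - intros t [Ht Hzero]; apply Hroot in Hzero; [|exact Ht].
    rewrite <- (exp_ln t Ht); f_equal.
    apply (exp_affine_inj (q - p) C L A); lra.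
Qed.

Lemma summableZ_mul_apow (c u : Z -> R) (s B : R) : 0 <= s ->
  (forall n, Rabs (u n) <= B) -> summableZ c -> summableZ (fun n => c n * apow (u n) s).
Proof.
  intros Hs HB Hc.
  apply summableZ_le with (fun n => Rpower B s * Rabs (c n)).
  - intros n; rewrite Rabs_mult, (Rabs_pos_eq (apow _ _)) by apply apow_ge0.
    rewrite Rmult_comm; apply Rmult_le_compat_r; [apply Rabs_pos|].
    apply apow_le_Rpower; [exact Hs | apply HB].
  - apply summableZ_scal, summableZ_Rabs, Hc.
Qed.

Lemma Delta_scale (t : R) (u : Z -> R) (n : Z) :
  Defs.Delta (scaleZ t u) n = t * Defs.Delta u n.
Proof. unfold Defs.Delta, scaleZ; ring. Qed.

Section Fibering.

Variables (p q r : R) (a b c : Z -> R).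

Definition energy_density (u : Z -> R) (n : Z) : R :=
  a n * apow (Defs.Delta u n) p + b n * apow (u n) p.

Definition normp (u : Z -> R) : R := sumZ (energy_density u).

Definition qmass (u : Z -> R) : R := sumZ (fun n => c n * apow (u n) q).

Definition logmass (u : Z -> R) : R := sumZ (logterm q r c u).

Lemma dI_diag (u : Z -> R) : dI p q r a b c u u = normp u - logmass u.
Proof.
  unfold dI, normp, energy_density, logmass, logterm; f_equal; apply sumZ_ext; intros n.
  - rewrite <- (apow_sub2_mul_sqr (Defs.Delta u n) p), <- (apow_sub2_mul_sqr (u n) p); ring.
  - destruct (Req_EM_T (u n) 0); [reflexivity|].
    rewrite <- (apow_sub2_mul_sqr (u n) q); ring.
Qed.

Lemma logterm_scale (t : R) (u : Z -> R) (n : Z) : 0 < t ->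
  logterm q r c (scaleZ t u) n
  = Rpower t q * (r * ln t * (c n * apow (u n) q) + logterm q r c u n).
Proof.
  intros Ht; unfold logterm, scaleZ.
  destruct (Req_EM_T (u n) 0) as [Hu|Hu].
  - rewrite Hu, Rmult_0_r, apow_0.
    destruct (Req_EM_T 0 0); [ring | contradiction].
  - destruct (Req_EM_T (t * u n) 0) as [Htu|_].
    + apply Rmult_integral in Htu; lra.
    + rewrite apow_scale by exact Ht.
      unfold Rpower at 2 4; rewrite !ln_exp, Rabs_mult, (Rabs_pos_eq t) by lra.
      rewrite ln_mult by (try apply Rabs_pos_lt; assumption); ring.
Qed.

Lemma energy_density_scale (t : R) (u : Z -> R) (n : Z) : 0 < t ->
  energy_density (scaleZ t u) n = Rpower t p * energy_density u n.
Proof.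
  intros Ht; unfold energy_density; rewrite Delta_scale; unfold scaleZ.
  rewrite !apow_scale by exact Ht; ring.
Qed.

Lemma normp_scale (t : R) (u : Z -> R) : 0 < t ->
  normp (scaleZ t u) = Rpower t p * normp u.
Proof.
  intros Ht; unfold normp; rewrite <- sumZ_scal.
  apply sumZ_ext; intros n; apply energy_density_scale, Ht.
Qed.

Section Bounds.

Variable u : Z -> R.
Hypothesis a_ge0 : forall n, 0 <= a n.
Hypothesis b_ge0 : forall n, 0 <= b n.
Hypothesis u_inE : inE p a b u.

Lemma energy_density_ge0 (n : Z) : 0 <= energy_density u n.
Proof.
  pose proof (a_ge0 n); pose proof (b_ge0 n).
  pose proof (apow_ge0 (Defs.Delta u n) p); pose proof (apow_ge0 (u n) p).
  unfold energy_density; nra.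
Qed.

Lemma b_apow_le_normp (n : Z) : b n * apow (u n) p <= normp u.
Proof.
  apply Rle_trans with (energy_density u n).
  - pose proof (a_ge0 n); pose proof (apow_ge0 (Defs.Delta u n) p).
    unfold energy_density; nra.
  - exact (sumZ_term_le _ n energy_density_ge0 u_inE).
Qed.

Lemma normp_gt0 (n0 : Z) : 0 < b n0 -> u n0 <> 0 -> 0 < normp u.
Proof.
  intros Hb Hu; eapply Rlt_le_trans; [|apply b_apow_le_normp].
  apply Rmult_lt_0_compat; [exact Hb | apply apow_gt0, Hu].
Qed.

Lemma Rabs_le_normp (b0 : R) : 1 <= p -> 0 < b0 -> (forall n, b0 <= b n) ->
  forall n, Rabs (u n) <= 1 + normp u / b0.
Proof.
  intros Hp Hb0 Hb n.
  assert (Hterm : b0 * apow (u n) p <= normp u).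
  { eapply Rle_trans; [|apply b_apow_le_normp].
    apply Rmult_le_compat_r; [apply apow_ge0 | apply Hb]. }
  assert (Hquot : apow (u n) p <= normp u / b0).
  { apply Rmult_le_reg_l with b0; [exact Hb0 | field_simplify; lra]. }
  pose proof (apow_ge0 (u n) p).
  destruct (Rle_lt_dec (Rabs (u n)) 1) as [Hle|Hgt]; [lra|].
  pose proof (Rabs_le_apow (u n) p Hp (Rlt_le _ _ Hgt)); lra.
Qed.

End Bounds.

Lemma qmass_gt0 (u : Z -> R) (n0 : Z) : (forall n, 0 < c n) ->
  summableZ (fun n => c n * apow (u n) q) -> u n0 <> 0 -> 0 < qmass u.
Proof.
  intros Hc Hsum Hu.
  apply Rlt_le_trans with (c n0 * apow (u n0) q).
  - apply Rmult_lt_0_compat; [apply Hc | apply apow_gt0, Hu].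
  - apply (sumZ_term_le (fun n => c n * apow (u n) q)); [|exact Hsum].
    intros n; apply Rmult_le_pos; [left; apply Hc | apply apow_ge0].
Qed.

Section Ray.

Variable u : Z -> R.
Hypothesis qmass_summable : summableZ (fun n => c n * apow (u n) q).
Hypothesis u_inD : inD p q r a b c u.

Lemma logmass_scale (t : R) : 0 < t ->
  logmass (scaleZ t u) = Rpower t q * (r * ln t * qmass u + logmass u).
Proof.
  intros Ht; unfold logmass, qmass.
  rewrite (sumZ_ext _ _ (fun n => logterm_scale t u n Ht)), sumZ_scal, sumZ_plus, sumZ_scal.
  - reflexivity.
  - apply summableZ_scal, qmass_summable.
  - apply u_inD.
Qed.

Lemma inD_scale (t : R) : 0 < t -> inD p q r a b c (scaleZ t u).
Proof.
  intros Ht; destruct u_inD as [HE Hlog]; split.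
  - apply summableZ_ext with (fun n => Rpower t p * energy_density u n).
    + intros n; symmetry; apply energy_density_scale, Ht.
    + apply summableZ_scal, HE.
  - apply summableZ_ext with (fun n =>
      Rpower t q * (r * ln t * (c n * apow (u n) q) + logterm q r c u n)).
    + intros n; symmetry; apply logterm_scale, Ht.
    + apply summableZ_scal, summableZ_plus; [apply summableZ_scal|]; assumption.
Qed.

Lemma dI_scale_diag (t : R) : 0 < t ->
  dI p q r a b c (scaleZ t u) (scaleZ t u)
  = Rpower t p * normp u - Rpower t q * (r * qmass u * ln t + logmass u).
Proof.
  intros Ht; rewrite dI_diag, normp_scale, logmass_scale by exact Ht; ring.
Qed.

End Ray.

End Fibering.

Theorem lemma2p6 (p q r : R) (a b c : Z -> R)
  (hp1 : 1 < p) (hpq : p < q) (hp2 : exists k : nat, (1 <= k)%nat /\ p = 2 * INR k)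
  (hr : 1 <= r)
  (ha : forall n, 0 < a n) (hb : forall n, 0 < b n) (hc : forall n, 0 < c n)
  (hC1 : condC1 b) (hC2 : condC2 c)
  (u : Z -> R) (hu : inD p q r a b c u) (hu0 : exists n, u n <> 0) :
  exists! t0 : R, 0 < t0 /\ inN p q r a b c (scaleZ t0 u).
Proof.
  destruct hu0 as [n0 hn0].
  destruct hC1 as [[b0 [hb0 hb0_le]] _].
  destruct hC2 as [_ hc_sum].
  assert (ha_ge0 : forall n, 0 <= a n) by (intros n; left; apply ha).
  assert (hb_ge0 : forall n, 0 <= b n) by (intros n; left; apply hb).
  assert (hq : summableZ (fun n => c n * apow (u n) q)).
  { apply (summableZ_mul_apow c u q (1 + normp p a b u / b0)); [lra | | exact hc_sum].
    apply Rabs_le_normp; auto; [apply hu | lra]. }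
  assert (hA : 0 < normp p a b u)
    by (apply (normp_gt0 p a b u ha_ge0 hb_ge0 (proj1 hu) n0); auto).
  assert (hC : 0 < r * qmass q c u)
    by (apply Rmult_lt_0_compat; [lra | apply (qmass_gt0 q c u n0); auto]).
  destruct (fibering_root_unique p q _ _ (logmass q r c u) (Rlt_le _ _ hpq) hA hC)
    as [t0 [[ht0 hroot] huniq]].
  exists t0; split.
  - split; [exact ht0|]; split; [|split].
    + apply inD_scale; assumption.
    + exists n0; unfold scaleZ; apply Rmult_integral_contrapositive; split; lra.
    + rewrite dI_scale_diag; assumption.
  - intros t [ht [_ [_ hdI]]]; apply huniq; split; [exact ht|].
    rewrite dI_scale_diag in hdI; assumption.
Qed.
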